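(* Let $\Gamma_1,\Gamma_2$ be disjoint sets of unary letters and consider the following nondeterministic procedure on a context equation $u = v$. First, for each context variable $X$: guess a letter $a$ (intended as the last letter of a solution's value for $X$); if $a\in\Gamma_1$, replace every occurrence of $X$ by $Xa$ (i.e. each $X(s)$ by $X(a(s))$), and then guess whether $X$ is to be removed, in which case replace every $X(s)$ by $s$. Second, for each context variable $X$ and each variable $x$: guess a letter $b$ (intended as its first letter); if $b\in\Gamma_2$, replace every occurrence of $X$ by $bX$ (each $X(s)$ by $b(X(s))$), respectively every $x$ by $b(x)$, and then (for context variables) guess whether $X$ is to be removed, in which case replace each $X(s)$ by $s$. Then: (a) whatever the choices, if the resulting equation $u'=v'$ has a solution, so does $u=v$; (b) if $u=v$ has a non-empty solution $\sigma$, then for some choices the resulting equation $u'=v'$ has a non-empty solution $\sigma'$ such that $\sigma'(u')=\sigma(u)$ and $\Gamma_1,\Gamma_2$ is a non-crossing partition with respect to $\sigma'$.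
   Context: $\Sigma$ is a ranked signature, $\Omega\notin\Sigma$ a special constant; context variables have arity $1$, variables arity $0$. Ground terms, ground contexts (exactly one $\Omega$), terms and context equations $u=v$ are as usual; a substitution $\sigma$ assigns ground contexts to context variables and ground terms to variables, extended by $\sigma(a)=a$, $\sigma(f(t_1,\dots,t_m))=f(\sigma(t_1),\dots,\sigma(t_m))$, $\sigma(Xt)=\sigma(X)\sigma(t)$; a solution satisfies $\sigma(u)=\sigma(v)$; it is non-empty if $\sigma(X)\neq\Omega$ for every context variable $X$ occurring in the equation. The first letter of $\sigma(X)$ or $\sigma(x)$ is the label of its root; the last letter of $\sigma(X)$ is the label of the father of $\Omega$. Each node of $\sigma(u)$ comes either from an explicit letter occurrence of $u$ or from $\sigma(X)$ or $\sigma(x)$ for a particular occurrence of $X$ or $x$. An occurrence in $\sigma(u)$ or $\sigma(v)$ of a node labelled $a$ with child labelled $b$ is explicit if both come from explicit letters, implicit if both come from the same $\sigma(X)$ or $\sigma(x)$, and crossing otherwise. $\Gamma_1,\Gamma_2$ is non-crossing w.r.t. $\sigma$ if no $a\in\Gamma_1$, $b\in\Gamma_2$ have a crossing occurrence of $ab$. *)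

From mathcomp Require Import all_boot.
From Stdlib Require List.
Set Implicit Arguments. Unset Strict Implicit. Unset Printing Implicit Defensive.

(* Labelled ordered trees; [Hole] is the special constant Omega (not a  *)
(* letter of the signature).                                           *)
Inductive tree (L : Type) : Type :=
| Node : L -> seq (tree L) -> tree L
| Hole : tree L.
Arguments Hole {L}.

Fixpoint plug (L : Type) (c s : tree L) : tree L :=
  match c with
  | Hole => s
  | Node l ts => Node l (map (fun c' => plug c' s) ts)
  end.

Fixpoint map_tree (L L' : Type) (f : L -> L') (t : tree L) : tree L' :=
  match t with
  | Hole => Hole
  | Node l ts => Node (f l) (map (map_tree f) ts)
  end.

Definition root_label (L : Type) (t : tree L) : option L :=
  match t with Hole => None | Node l _ => Some l end.

Fixpoint edges (L : Type) (t : tree L) : seq (L * L) :=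
  match t with
  | Hole => [::]
  | Node l ts =>
      (fix go (ts : seq (tree L)) : seq (L * L) :=
         match ts with
         | [::] => [::]
         | c :: r =>
             match root_label c with
             | Some l' => (l, l') :: edges c
             | None => edges c
             end ++ go r
         end) ts
  end.

Fixpoint holes (L : Type) (t : tree L) : nat :=
  match t with
  | Hole => 1
  | Node _ ts => sumn (map (@holes L) ts)
  end.

Section Terms.
Variables (Sigma V CV : Type) (arity : Sigma -> nat).

Fixpoint ranked (t : tree Sigma) : Prop :=
  match t with
  | Hole => True
  | Node f ts => size ts = arity f /\
      (fix go (ts : seq (tree Sigma)) : Prop :=
         match ts with [::] => True | c :: r => ranked c /\ go r end) ts
  end.

Definition ground_term (t : tree Sigma) : Prop := ranked t /\ holes t = 0.
Definition ground_context (t : tree Sigma) : Prop := ranked t /\ holes t = 1.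

Inductive term : Type :=
| Var : V -> term
| CApp : CV -> term -> term
| App : Sigma -> seq term -> term.

Fixpoint wf_term (t : term) : Prop :=
  match t with
  | Var _ => True
  | CApp _ s => wf_term s
  | App f ts => size ts = arity f /\
      (fix go (ts : seq term) : Prop :=
         match ts with [::] => True | c :: r => wf_term c /\ go r end) ts
  end.

Fixpoint occurs_cv (X : CV) (t : term) : Prop :=
  match t with
  | Var _ => False
  | CApp Y s => Y = X \/ occurs_cv X s
  | App _ ts =>
      (fix go (ts : seq term) : Prop :=
         match ts with [::] => False | c :: r => occurs_cv X c \/ go r end) ts
  end.

Record subst : Type := Subst {
  sctx : CV -> tree Sigma;
  svar : V -> tree Sigma
}.

Definition admissible (s : subst) : Prop :=
  (forall X, ground_context (sctx s X)) /\ (forall x, ground_term (svar s x)).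

Fixpoint apply (s : subst) (t : term) : tree Sigma :=
  match t with
  | Var x => svar s x
  | CApp X u => plug (sctx s X) (apply s u)
  | App f ts => Node f (map (apply s) ts)
  end.

Definition solution (s : subst) (u v : term) : Prop :=
  admissible s /\ apply s u = apply s v.

Definition nonempty (s : subst) (u v : term) : Prop :=
  forall X, occurs_cv X u \/ occurs_cv X v -> sctx s X <> Hole.

(* Origin of a node of sigma(u): an explicit letter of u, or the value
   of the (context) variable occurrence at the given position of u. *)
Inductive origin : Type :=
| Explicit : origin
| FromOcc : seq nat -> origin.

(* sigma(u), each node annotated with its origin; [p] is the position *)
Fixpoint aapply (s : subst) (p : seq nat) (t : term) : tree (Sigma * origin) :=
  match t with
  | Var x => map_tree (fun a => (a, FromOcc p)) (svar s x)
  | CApp X u => plug (map_tree (fun a => (a, FromOcc p)) (sctx s X))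
                     (aapply s (rcons p 0) u)
  | App f ts => Node (f, Explicit)
      ((fix go (i : nat) (ts : seq term) : seq (tree (Sigma * origin)) :=
          match ts with
          | [::] => [::]
          | c :: r => aapply s (rcons p i) c :: go i.+1 r
          end) 0 ts)
  end.

(* an occurrence of ab is crossing iff the two nodes have different
   origins (explicit = both explicit; implicit = same occurrence) *)
Definition crossing_in (s : subst) (t : term) (a b : Sigma) : Prop :=
  exists o1 o2, List.In ((a, o1), (b, o2)) (edges (aapply s [::] t)) /\ o1 <> o2.

Definition noncrossing (G1 G2 : pred Sigma) (s : subst) (u v : term) : Prop :=
  forall a b, G1 a -> G2 b -> ~ crossing_in s u a b /\ ~ crossing_in s v a b.

Record choices : Type := Choices {
  last_letter : CV -> Sigma;
  remove1 : CV -> bool;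
  first_letter : CV -> Sigma;
  remove2 : CV -> bool;
  first_letter_var : V -> Sigma
}.

Fixpoint phase1 (G1 : pred Sigma) (c : choices) (t : term) : term :=
  match t with
  | Var x => Var x
  | App f ts => App f (map (phase1 G1 c) ts)
  | CApp X s =>
      let s' := phase1 G1 c s in
      if G1 (last_letter c X) then
        let s'' := App (last_letter c X) [:: s'] in
        if remove1 c X then s'' else CApp X s''
      else CApp X s'
  end.

Fixpoint phase2 (G2 : pred Sigma) (c : choices) (t : term) : term :=
  match t with
  | Var x => if G2 (first_letter_var c x) then App (first_letter_var c x) [:: Var x]
             else Var x
  | App f ts => App f (map (phase2 G2 c) ts)
  | CApp X s =>
      let s' := phase2 G2 c s in
      if G2 (first_letter c X) then
        App (first_letter c X) [:: if remove2 c X then s' else CApp X s']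
      else CApp X s'
  end.

Definition transform (G1 G2 : pred Sigma) (c : choices) (t : term) : term :=
  phase2 G2 c (phase1 G1 c t).

End Terms.

(* Each phase rewrites every occurrence of a context variable X by a fixed context
   expression in X, so composing a solution of the new equation with these
   expressions solves the old one.  Conversely, for a non-empty solution sigma, guess
   the last letter a of sigma(X), then the first letter b of what remains, and the
   first letter of sigma(x); sigma' strips a off sigma(X) when a is in G1 and b when
   b is in G2 (removing X when nothing is left), and similarly for sigma(x).  An edge
   of sigma'(u') with two origins goes from the father of the hole of some sigma'(X),
   or from an explicit letter, to the root of the value of an argument.  The hole of
   sigma'(X) has a G1 father only when X is now applied to the explicit letter a,
   which is not in G2; a root of sigma'(X) or sigma'(x) is in G2 only below the
   explicit letter b, which is not in G1.  So no such edge joins G1 to G2. *)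
From mathcomp Require Import all_boot.
From Stdlib Require List.
From Stdlib Require Import IndefiniteDescription.
Set Implicit Arguments. Unset Strict Implicit. Unset Printing Implicit Defensive.
Set Bullet Behavior "Strict Subproofs".

Lemma In_leq_sumn (A : Type) (f : A -> nat) c s : List.In c s -> f c <= sumn (map f s).
Proof.
elim: s => [|d s IHs] //= [<-|Hc]; first exact: leq_addr.
exact: leq_trans (IHs Hc) (leq_addl _ _).
Qed.

Lemma In_sumn_eq0 (A : Type) (f : A -> nat) c s :
  sumn (map f s) = 0 -> List.In c s -> f c = 0.
Proof. by move=> Hs Hc; apply/eqP; rewrite -leqn0 -Hs In_leq_sumn. Qed.

Lemma sumn_gt0_In (A : Type) (f : A -> nat) s :
  0 < sumn (map f s) -> exists2 c, List.In c s & 0 < f c.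
Proof.
elim: s => [|c s IHs] //=; case Ec: (f c) => [|k] /=.
- by move=> /IHs[d Hd Hfd]; exists d => //; right.
- by move=> _; exists c; [left|rewrite Ec].
Qed.

Section Trees.
Variable L : Type.
Implicit Types (C D t : tree L) (l : L) (ts : seq (tree L)).

Definition tree_nested_ind (P : tree L -> Prop) (HH : P Hole)
  (HN : forall l ts, (forall t, List.In t ts -> P t) -> P (Node l ts)) : forall t, P t :=
  fix F t := match t with
  | Hole => HH
  | Node l ts => HN l ts ((fix G ts : forall t, List.In t ts -> P t :=
       match ts with
       | [::] => fun t (H : List.In t [::]) => match H with end
       | c :: r => fun t H => match H with
                   | or_introl E => eq_ind c P (F c) t E
                   | or_intror H' => G r t H' end
       end) ts)
  end.

Lemma plug_closed C D : holes C = 0 -> plug C D = C.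
Proof.
elim/tree_nested_ind: C => [//|l ts IH] /= Hts; congr Node.
rewrite -[RHS]map_id; apply: List.map_ext_in => c Hc.
exact/IH/(In_sumn_eq0 Hts).
Qed.

Lemma holes_plug C D : holes (plug C D) = holes C * holes D.
Proof.
elim/tree_nested_ind: C => [|l ts IH] /=; first by rewrite mul1n.
elim: ts IH => [|c ts IHts] IH //=.
by rewrite mulnDl IH ?IHts //; [move=> t Ht; apply: IH; right | left].
Qed.

Lemma plug_assoc C D t : plug (plug C D) t = plug C (plug D t).
Proof.
elim/tree_nested_ind: C => [//|l ts IH] /=; congr Node.
by rewrite -map_comp; apply: List.map_ext_in => c Hc; exact: IH.
Qed.

Lemma plug_Node_cat l ts1 C ts2 D :
  sumn (map (@holes L) ts1) = 0 -> sumn (map (@holes L) ts2) = 0 ->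
  plug (Node l (ts1 ++ C :: ts2)) D = Node l (ts1 ++ plug C D :: ts2).
Proof.
move=> Hts1 Hts2 /=; rewrite map_cat /=; congr (Node l (_ ++ _ :: _)).
- by rewrite -[RHS]map_id; apply: List.map_ext_in => c Hc; rewrite plug_closed ?(In_sumn_eq0 Hts1).
- by rewrite -[RHS]map_id; apply: List.map_ext_in => c Hc; rewrite plug_closed ?(In_sumn_eq0 Hts2).
Qed.

Inductive hole_father : tree L -> L -> Prop :=
| HoleFatherHere l ts : List.In Hole ts -> hole_father (Node l ts) l
| HoleFatherDeep l ts c l' :
    List.In c ts -> hole_father c l' -> hole_father (Node l ts) l'.

Lemma hole_father_NodeE l ts l' : hole_father (Node l ts) l' ->
  (l' = l /\ List.In Hole ts) \/ exists2 c, List.In c ts & hole_father c l'.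
Proof. by move=> H; inversion H; subst; [left | right; exists c]. Qed.

Lemma hole_father_holes_gt0 t l : hole_father t l -> 0 < holes t.
Proof.
elim=> [{}l ts Hts|{}l ts c l' Hc _ IH] /=; first exact: In_leq_sumn Hts.
exact: leq_trans IH (In_leq_sumn _ Hc).
Qed.

Lemma hole_father_Node_cat l ts1 c ts2 l' :
  sumn (map (@holes L) ts1) = 0 -> sumn (map (@holes L) ts2) = 0 ->
  hole_father (Node l (ts1 ++ c :: ts2)) l' -> (c = Hole /\ l' = l) \/ hole_father c l'.
Proof.
move=> Hts1 Hts2 Hf; have only_c d : List.In d (ts1 ++ c :: ts2) -> 0 < holes d -> d = c.
{ move=> /(@List.in_app_or _ _ _ d)[Hd|[//|Hd]];
  by rewrite ?(In_sumn_eq0 Hts1 Hd) ?(In_sumn_eq0 Hts2 Hd). }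
case: (hole_father_NodeE Hf) => [[-> HHole]|[d Hd {}Hf]].
- by left; rewrite -(only_c _ HHole).
- by right; rewrite -(only_c d Hd (hole_father_holes_gt0 Hf)).
Qed.

Lemma exists_hole_father t : 0 < holes t -> t <> Hole -> exists l, hole_father t l.
Proof.
elim/tree_nested_ind: t => [//|l ts IH] /sumn_gt0_In[[l0 ts0|] Hc Hholes] _.
- have [l' Hl'] := IH _ Hc Hholes (fun E : Node l0 ts0 = Hole => ltac:(discriminate E)).
  by exists l'; exact: HoleFatherDeep Hc Hl'.
- by exists l; exact: HoleFatherHere.
Qed.

Lemma edges_cons l c ts : edges (Node l (c :: ts)) =
  (if root_label c is Some l' then (l, l') :: edges c else edges c) ++ edges (Node l ts).
Proof. by []. Qed.

Lemma edges_NodeP l ts e : List.In e (edges (Node l ts)) ->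
  exists2 c, List.In c ts &
    (exists2 l', root_label c = Some l' & e = (l, l')) \/ List.In e (edges c).
Proof.
elim: ts => [|c ts IHts] //; rewrite edges_cons => /(@List.in_app_or _ _ _ e)[He|/IHts[d Hd He]].
  2: by exists d => //; right.
exists c; first by left.
case: (root_label c) He => [l'|] He; last by right.
by case: He => [<-|He]; [left; exists l' | right].
Qed.

Lemma edges_Node_root l ts c l' : List.In c ts -> root_label c = Some l' ->
  List.In (l, l') (edges (Node l ts)).
Proof.
elim: ts => [|d ts IHts] // [<-|Hc] Hroot; rewrite edges_cons; apply: List.in_or_app.
- by left; rewrite Hroot; left.
- by right; exact: IHts.
Qed.

Lemma edges_Node_child l ts c e : List.In c ts -> List.In e (edges c) ->
  List.In e (edges (Node l ts)).
Proof.
elim: ts => [|d ts IHts] // [<-|Hc] He; rewrite edges_cons; apply: List.in_or_app.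
- by left; case: root_label => //; right.
- by right; exact: IHts.
Qed.

Lemma edges_plug C D e : List.In e (edges (plug C D)) ->
  [\/ List.In e (edges C), List.In e (edges D) |
      exists l r, [/\ hole_father C l, root_label D = Some r & e = (l, r)]].
Proof.
elim/tree_nested_ind: C => [|l ts IH]; first by move=> He; apply: Or32.
move=> /edges_NodeP[c' /List.in_map_iff[c [<- Hc]] He].
case: He => [[l' Hroot ->]|He].
- case: c Hc Hroot => [l0 ts0|] Hc /= Hroot.
  + by apply: Or31; case: Hroot => <-; exact: edges_Node_root Hc _.
  + by apply: Or33; exists l, l'; split=> //; exact: HoleFatherHere.
- case: (IH c Hc He) => [He'|He'|[l1 [r [Hf Hr ->]]]].
  + by apply: Or31; exact: edges_Node_child Hc He'.
  + exact: Or32.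
  + by apply: Or33; exists l1, r; split=> //; exact: HoleFatherDeep Hc Hf.
Qed.

End Trees.

Section MapTree.
Variables (L L' : Type) (f : L -> L').

Lemma root_label_map_tree t : root_label (map_tree f t) = omap f (root_label t).
Proof. by case: t. Qed.

Lemma edges_map_tree t e : List.In e (edges (map_tree f t)) ->
  exists2 e0, List.In e0 (edges t) & e = (f e0.1, f e0.2).
Proof.
elim/tree_nested_ind: t => [//|l ts IH].
move=> /(@edges_NodeP _ (f l))[_ /List.in_map_iff[c [<- Hc]] [[l' Hroot ->]|He]].
- rewrite root_label_map_tree in Hroot.
  case Ec: (root_label c) Hroot => [l0|] //= [<-].
  by exists (l, l0) => //; exact: edges_Node_root Hc Ec.
- have [e0 He0 ->] := IH c Hc He.
  by exists e0 => //; exact: edges_Node_child Hc He0.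
Qed.

Lemma hole_father_map_tree C l' : hole_father (map_tree f C) l' ->
  exists2 l, hole_father C l & l' = f l.
Proof.
elim/tree_nested_ind: C => [|l ts IH] /= HC; first by inversion HC.
case: (hole_father_NodeE HC) => [[-> /List.in_map_iff[c [Ec Hc]]]|].
- by case: c Ec Hc => // _ Hc; exists l => //; exact: HoleFatherHere.
- move=> [_ /List.in_map_iff[c [<- Hc]] Hf].
  have [l0 Hl0 ->] := IH c Hc Hf.
  by exists l0 => //; exact: HoleFatherDeep Hc Hl0.
Qed.

End MapTree.

Section Ranked.
Variables (Sigma : Type) (arity : Sigma -> nat).
Implicit Types (C D t : tree Sigma) (ts : seq (tree Sigma)).

Lemma ranked_NodeE a ts : ranked arity (Node a ts) <->
  size ts = arity a /\ (forall c, List.In c ts -> ranked arity c).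
Proof.
rewrite /=; split=> -[Hsize Hts]; split=> //; elim: ts {Hsize} Hts => [|c ts IHts] //=.
- by move=> [Hc Hts] d [<-|Hd] //; exact: IHts.
- by move=> Hts; split; [apply: Hts; left | apply: IHts => d Hd; apply: Hts; right].
Qed.

Lemma ranked_plug C D : ranked arity C -> ranked arity D -> ranked arity (plug C D).
Proof.
elim/tree_nested_ind: C => [//|a ts IH] /ranked_NodeE[Hsize Hts] HD.
apply/ranked_NodeE; split; first by rewrite size_map.
by move=> c' /List.in_map_iff[c [<- Hc]]; apply: IH => //; exact: Hts.
Qed.

Lemma ground_context_plug C D :
  ground_context arity C -> ground_context arity D -> ground_context arity (plug C D).
Proof. by move=> [? HC] [? HD]; split; [exact: ranked_plug | rewrite holes_plug HC HD]. Qed.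

Lemma ground_context_unary a C :
  arity a = 1 -> ground_context arity C -> ground_context arity (Node a [:: C]).
Proof. by move=> Ha [? HC]; split; [split | rewrite /= HC]. Qed.

Lemma ground_term_unary a t :
  arity a = 1 -> ground_term arity t -> ground_term arity (Node a [:: t]).
Proof. by move=> Ha [? Ht]; split; [split | rewrite /= Ht]. Qed.

Lemma ranked_unaryE a ts : ranked arity (Node a ts) -> arity a = 1 ->
  exists2 t, ts = [:: t] & ranked arity t.
Proof.
move=> [Hsize Hts] Ha; rewrite Ha in Hsize.
by case: ts Hsize Hts => [|t [|? ?]] // _ [Ht _]; exists t.
Qed.

Lemma ranked_Node_cat a ts1 c ts2 C :
  ranked arity (Node a (ts1 ++ c :: ts2)) -> ranked arity C ->
  ranked arity (Node a (ts1 ++ C :: ts2)).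
Proof.
move=> /ranked_NodeE[Hsize Hts] HC; apply/ranked_NodeE; split; first by rewrite -Hsize !size_cat.
move=> d /(@List.in_app_or _ _ _ d)[Hd|[<-|Hd]] //; apply: Hts; apply: List.in_or_app;
  [left | right; right] => //.
Qed.

Lemma split_one_hole ts : sumn (map (@holes _) ts) = 1 ->
  exists ts1 c ts2, [/\ ts = ts1 ++ c :: ts2, holes c = 1,
    sumn (map (@holes _) ts1) = 0 & sumn (map (@holes _) ts2) = 0].
Proof.
elim: ts => [|c ts IHts] //=; case Ec: (holes c) => [|[|k]] //=.
- rewrite add0n => /IHts[ts1 [d [ts2 [-> Hd H1 H2]]]].
  by exists (c :: ts1), d, ts2; rewrite /= Ec H1.
- by move=> [Hts]; exists [::], c, ts.
Qed.

Lemma ground_context_last_letter (P : pred Sigma) C :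
  (forall a, P a -> arity a = 1) -> ground_context arity C ->
  (exists C1 a, [/\ P a, C = plug C1 (Node a [:: Hole]) & ground_context arity C1]) \/
  (forall l, hole_father C l -> ~~ P l).
Proof.
move=> HP; elim/tree_nested_ind: C => [_|l ts IH [Hranked Hholes]].
  by right=> l Hf; inversion Hf.
have [ts1 [c [ts2 [Ets Hc Hts1 Hts2]]]] := split_one_hole Hholes; subst ts; clear Hholes.
have Hc_in : List.In c (ts1 ++ c :: ts2) by apply: List.in_or_app; right; left.
have father_in_c := hole_father_Node_cat Hts1 Hts2.
case: c Hc IH Hc_in Hranked father_in_c => [l0 ts0|] Hc IH Hc_in Hranked father_in_c.
- have gc : ground_context arity (Node l0 ts0).
    by split=> //; case/ranked_NodeE: Hranked => _; apply.
  case: (IH _ Hc_in gc) => [[C1 [a [Pa EC1 [rC1 hC1]]]]|Hnot]; last first.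
    by right=> l' /father_in_c[[]|/Hnot].
  left; exists (Node l (ts1 ++ C1 :: ts2)), a; rewrite plug_Node_cat // -EC1; split=> //.
  split; first exact: ranked_Node_cat Hranked rC1.
  by rewrite /= !map_cat !sumn_cat /= Hts1 Hts2 hC1.
- case Pl: (P l); last by right=> l' /father_in_c[[_ ->]|Hf]; [rewrite Pl | inversion Hf].
  left; exists Hole, l; split=> //.
  case/ranked_NodeE: Hranked; rewrite (HP l Pl) size_cat /= => Hsize _.
  by case: ts1 {IH Hts1 Hc_in father_in_c} Hsize => [|? ?]; case: ts2 {Hts2} => [|? ?] //= /eqP;
    rewrite ?addnS.
Qed.

End Ranked.

Section Procedure.
Variables (Sigma V CV : Type) (arity : Sigma -> nat) (G1 G2 : pred Sigma).
Hypothesis G1_unary : forall a, G1 a -> arity a = 1.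
Hypothesis G2_unary : forall a, G2 a -> arity a = 1.

Local Notation term := (term Sigma V CV).
Local Notation subst := (subst Sigma V CV).
Local Notation choices := (choices Sigma V CV).
Implicit Types (t w : term) (ts : seq term) (s : subst) (c : choices) (C D : tree Sigma)
  (X : CV) (x : V) (a b f : Sigma).

Definition term_nested_ind (P : term -> Prop) (HV : forall x, P (Var _ _ x))
  (HC : forall X w, P w -> P (CApp X w))
  (HA : forall f ts, (forall t, List.In t ts -> P t) -> P (App f ts)) : forall t, P t :=
  fix F t := match t with
  | Var x => HV x
  | CApp X w => HC X w (F w)
  | App f ts => HA f ts ((fix G ts : forall t, List.In t ts -> P t :=
       match ts with
       | [::] => fun t (H : List.In t [::]) => match H with end
       | c :: r => fun t H => match H with
                   | or_introl E => eq_ind c P (F c) t E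
                   | or_intror H' => G r t H' end
       end) ts)
  end.

Lemma occurs_cv_AppP X f ts :
  occurs_cv X (App f ts) <-> exists2 t, List.In t ts & occurs_cv X t.
Proof.
elim: ts => [|t ts IHts] /=; first by split=> // -[].
split=> [[Ht|/IHts[t' Ht' Hocc]]|[t' [<-|Ht'] Hocc]].
- by exists t => //; left.
- by exists t' => //; right.
- by left.
- by right; apply/IHts; exists t'.
Qed.

Lemma eq_apply_occurs s1 s2 t :
  (forall X, occurs_cv X t -> sctx s1 X = sctx s2 X) -> svar s1 =1 svar s2 ->
  apply s1 t = apply s2 t.
Proof.
move=> HX Hx; elim/term_nested_ind: t HX => [x|X w IH|f ts IH] HX /=.
- exact: Hx.
- by rewrite HX /= ?IH // => [Y HY|]; [apply: HX; right | left].
- congr Node; apply: List.map_ext_in => t Ht; apply: IH => // X HXt.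
  by apply: HX; apply/occurs_cv_AppP; exists t.
Qed.

Lemma holes_apply s t : admissible arity s -> holes (apply s t) = 0.
Proof.
move=> [HX Hx]; elim/term_nested_ind: t => [x|X w IH|f ts IH] /=.
- by case: (Hx x).
- by rewrite holes_plug IH muln0.
- rewrite -map_comp; elim: ts IH => //= t ts IHts IH.
  by rewrite IH ?IHts //; [move=> t' Ht'; apply: IH; right | left].
Qed.

(* The value of [X] (resp. [x]) before a phase, given its value [C] (resp. [t]) after
   it; [C] is ignored when [X] was removed. *)
Definition ctx_phase1 a (r : bool) C :=
  if G1 a then plug (if r then Hole else C) (Node a [:: Hole]) else C.
Definition ctx_phase2 b (r : bool) C :=
  if G2 b then Node b [:: if r then Hole else C] else C.
Definition var_phase2 b (t : tree Sigma) := if G2 b then Node b [:: t] else t.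

Definition phase1_subst c s : subst :=
  Subst (fun X => ctx_phase1 (last_letter c X) (remove1 c X) (sctx s X)) (svar s).
Definition phase2_subst c s : subst :=
  Subst (fun X => ctx_phase2 (first_letter c X) (remove2 c X) (sctx s X))
        (fun x => var_phase2 (first_letter_var c x) (svar s x)).

Lemma apply_phase1 c s t : apply s (phase1 G1 c t) = apply (phase1_subst c s) t.
Proof.
elim/term_nested_ind: t => [x|X w IH|f ts IH] //=.
- rewrite /ctx_phase1; case: (G1 _); last by rewrite /= IH.
  by case: (remove1 c X) => /=; rewrite ?plug_assoc /= IH.
- by congr Node; rewrite -map_comp; apply: List.map_ext_in.
Qed.

Lemma apply_phase2 c s t : apply s (phase2 G2 c t) = apply (phase2_subst c s) t.
Proof.
elim/term_nested_ind: t => [x|X w IH|f ts IH] /=.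
- by rewrite /var_phase2; case: (G2 _).
- rewrite /ctx_phase2; case: (G2 _); last by rewrite /= IH.
  by case: (remove2 c X) => /=; rewrite IH.
- by congr Node; rewrite -map_comp; apply: List.map_ext_in.
Qed.

Lemma apply_transform c s t :
  apply s (transform G1 G2 c t) = apply (phase1_subst c (phase2_subst c s)) t.
Proof. by rewrite /transform apply_phase2 apply_phase1. Qed.

Lemma admissible_phase1_subst c s : admissible arity s -> admissible arity (phase1_subst c s).
Proof.
move=> [HX Hx]; split=> // X /=; rewrite /ctx_phase1; case: ifP => // Ha.
apply: ground_context_plug; first by case: (remove1 c X).
exact: ground_context_unary (G1_unary Ha) _.
Qed.

Lemma admissible_phase2_subst c s : admissible arity s -> admissible arity (phase2_subst c s).
Proof.
move=> [HX Hx]; split=> [X|x] /=; [rewrite /ctx_phase2 | rewrite /var_phase2]; case: ifP => // Hb.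
- by apply: ground_context_unary (G2_unary Hb) _; case: (remove2 c X).
- exact: ground_term_unary (G2_unary Hb) _.
Qed.

Lemma solution_transform c s u v :
  solution arity s (transform G1 G2 c u) (transform G1 G2 c v) ->
  solution arity (phase1_subst c (phase2_subst c s)) u v.
Proof.
move=> [Hs Euv]; split; first exact/admissible_phase1_subst/admissible_phase2_subst.
by rewrite -!apply_transform.
Qed.

Hypothesis G1_G2_disjoint : forall a, G1 a -> G2 a -> False.

Lemma G1_notG2 a : G1 a -> ~~ G2 a.
Proof. by move=> Ha; apply/negP; exact: G1_G2_disjoint. Qed.

Lemma split_first_letter D : ground_context arity D -> D <> Hole ->
  exists b r C', [/\ ground_context arity C', D = ctx_phase2 b r C',
    ~~ G2 b -> ~~ oapp G2 false (root_label C'),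
    ~~ (G2 b && r) -> C' <> Hole & forall l, hole_father C' l -> hole_father D l].
Proof.
case: D => [b ts|] // [Hranked Hholes] _.
case Hb: (G2 b); last by exists b, false, (Node b ts); rewrite /ctx_phase2 /= Hb.
have [D2 Ets HD2] := ranked_unaryE Hranked (G2_unary Hb); subst ts.
have {Hholes Hranked HD2} gD2 : ground_context arity D2 by split=> //; rewrite /= addn0 in Hholes.
case: D2 gD2 => [l2 ts2|] gD2.
- exists b, false, (Node l2 ts2); rewrite /ctx_phase2 Hb; split=> //.
  by move=> l Hl; apply: HoleFatherDeep Hl; left.
- by exists b, true, Hole; rewrite /ctx_phase2 Hb; split=> // l Hl; inversion Hl.
Qed.

Lemma split_last_letter C : ground_context arity C -> C <> Hole ->
  exists a r C1, [/\ ground_context arity C1, C = ctx_phase1 a r C1,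
    ~~ G1 a -> forall l, hole_father C1 l -> ~~ G1 l & ~~ (G1 a && r) -> C1 <> Hole].
Proof.
move=> gC NC; case: (ground_context_last_letter G1_unary gC) => [[C1 [a [Ha EC gC1]]]|HC].
- exists a, (if C1 is Hole then true else false), C1; rewrite /ctx_phase1 Ha.
  by case: C1 EC gC1 => [l ts|] EC gC1.
- have [l Hl] := exists_hole_father (ltac:(by case: gC => _ ->) : 0 < holes C) NC.
  by exists l, false, C; rewrite /ctx_phase1 (negbTE (HC l Hl)).
Qed.

Record ctx_split := CtxSplit {
  split_last : Sigma; split_rem1 : bool; split_first : Sigma; split_rem2 : bool;
  split_body : tree Sigma }.

(* Nothing is required of the split of [C = Hole]: such a [C] need not be of the form
   [ctx_phase1 a r1 (ctx_phase2 b r2 C')], e.g. when every letter is in [G1]. *)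
Definition ctx_split_spec C d :=
  let C' := split_body d in
  [/\ ground_context arity C',
      C <> Hole -> C = ctx_phase1 (split_last d) (split_rem1 d)
                         (ctx_phase2 (split_first d) (split_rem2 d) C'),
      ~~ G1 (split_last d) -> forall l, hole_father C' l -> ~~ G1 l,
      ~~ G2 (split_first d) -> ~~ oapp G2 false (root_label C')
    & C <> Hole -> ~~ (G1 (split_last d) && split_rem1 d) ->
      ~~ (G2 (split_first d) && split_rem2 d) -> C' <> Hole].

Lemma exists_ctx_split (d0 : Sigma) C : ground_context arity C ->
  exists d, ctx_split_spec C d.
Proof.
move=> gC; have [EC|NC] : C = Hole \/ C <> Hole by case: (C) => [? ?|]; [right | left].
  by subst C; exists (CtxSplit d0 false d0 false Hole); split=> // _ l Hl; inversion Hl.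
have [a [r1 [C1 [gC1 EC HC1 NC1]]]] := split_last_letter gC NC.
have [EC1|{}NC1] : C1 = Hole \/ C1 <> Hole by case: (C1) => [? ?|]; [right | left].
- subst C1; have /andP[Ha Hr1] : G1 a && r1 by apply: contraTT isT => /NC1 /(_ erefl).
  exists (CtxSplit a r1 a false Hole); split=> // _; last by rewrite Ha Hr1.
  by rewrite /ctx_phase2 (negbTE (G1_notG2 Ha)).
- have [b [r2 [C' [gC' EC1 HC' NC' HfC']]]] := split_first_letter gC1 NC1.
  exists (CtxSplit a r1 b r2 C'); split=> //; first by rewrite -EC1.
  by move=> Ha l /HfC'; exact: HC1.
Qed.

Definition var_split_spec (t : tree Sigma) (d : Sigma * tree Sigma) :=
  [/\ ground_term arity d.2, t = var_phase2 d.1 d.2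
    & ~~ G2 d.1 -> ~~ oapp G2 false (root_label d.2)].

Lemma exists_var_split (t : tree Sigma) : ground_term arity t -> exists d, var_split_spec t d.
Proof.
case: t => [b ts|] [Hranked Hholes] //.
case Hb: (G2 b); last by exists (b, Node b ts); rewrite /var_split_spec /var_phase2 /= Hb.
have [t' Ets Ht] := ranked_unaryE Hranked (G2_unary Hb); subst ts.
exists (b, t'); rewrite /var_split_spec /var_phase2 /= Hb; split=> //.
by split=> //; rewrite /= addn0 in Hholes.
Qed.

Lemma occurs_phase1 c X t : occurs_cv X (phase1 G1 c t) ->
  occurs_cv X t /\ ~~ (G1 (last_letter c X) && remove1 c X).
Proof.
elim/term_nested_ind: t => [x|Y w IH|f ts IH] //.
- rewrite /=; case Ha: (G1 _); [case Hr: (remove1 c Y)|] => /=.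
  + by case=> // /IH[Hw ->]; split=> //; right.
  + by case=> [<-|[/IH[Hw ->]|[]]]; [rewrite Hr andbF; split=> //; left | split=> //; right].
  + by case=> [<-|/IH[Hw ->]]; [rewrite Ha; split=> //; left | split=> //; right].
- move=> /occurs_cv_AppP[_ /List.in_map_iff[t [<- Ht]] /IH[//| Hocc ->]].
  by split=> //; apply/occurs_cv_AppP; exists t.
Qed.

Lemma occurs_phase2 c X t : occurs_cv X (phase2 G2 c t) ->
  occurs_cv X t /\ ~~ (G2 (first_letter c X) && remove2 c X).
Proof.
elim/term_nested_ind: t => [x|Y w IH|f ts IH].
- by rewrite /=; case: (G2 _) => /= -[].
- rewrite /=; case Hb: (G2 _); [case Hr: (remove2 c Y)|] => /=.
  + by case=> // /IH[Hw ->]; split=> //; right.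
  + by case=> [[<-|/IH[Hw ->]]|[]]; [rewrite Hr andbF; split=> //; left | split=> //; right].
  + by case=> [<-|/IH[Hw ->]]; [rewrite Hb; split=> //; left | split=> //; right].
- move=> /occurs_cv_AppP[_ /List.in_map_iff[t [<- Ht]] /IH[//| Hocc ->]].
  by split=> //; apply/occurs_cv_AppP; exists t.
Qed.

Lemma occurs_transform c X t : occurs_cv X (transform G1 G2 c t) ->
  [/\ occurs_cv X t, ~~ (G1 (last_letter c X) && remove1 c X)
    & ~~ (G2 (first_letter c X) && remove2 c X)].
Proof. by move=> /occurs_phase2[/occurs_phase1[? ?] ?]. Qed.

(* The label of the root of [apply s t] when that root does not come from an
   explicit letter of [t]. *)
Fixpoint implicit_root s t : option Sigma :=
  match t with
  | Var x => root_label (svar s x)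
  | CApp X w => if sctx s X is Hole then implicit_root s w else root_label (sctx s X)
  | App _ _ => None
  end.

(* An edge of [sigma(t)] with two origins joins an explicit letter to the implicit
   root of an argument, or the father of the hole of [sigma(X)] to the root of
   [sigma(w)] in a subterm [CApp X w]; the constructors forbid G1-G2 pairs there. *)
Inductive crossing_free s : term -> Prop :=
| CrossingFreeVar x : crossing_free s (Var _ _ x)
| CrossingFreeCApp X w : crossing_free s w ->
    (forall l, hole_father (sctx s X) l -> G1 l -> ~~ oapp G2 false (root_label (apply s w))) ->
    crossing_free s (CApp X w)
| CrossingFreeApp f ts : (forall t, List.In t ts -> crossing_free s t) ->
    (G1 f -> forall t, List.In t ts -> ~~ oapp G2 false (implicit_root s t)) ->
    crossing_free s (App f ts).

Fixpoint aapply_args s p (i : nat) ts : seq (tree (Sigma * origin)) :=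
  if ts is t :: ts' then aapply s (rcons p i) t :: aapply_args s p i.+1 ts' else [::].

Lemma aapply_App s p f ts : aapply s p (App f ts) = Node (f, Explicit) (aapply_args s p 0 ts).
Proof. by rewrite /=; congr Node; elim: ts 0 => [|t ts IHts] i //=; rewrite IHts. Qed.

Lemma In_aapply_args s p i ts T : List.In T (aapply_args s p i ts) ->
  exists2 t, List.In t ts & exists q, T = aapply s q t.
Proof.
elim: ts i => [|t ts IHts] i //= [<-|/IHts[t' Ht' HT]].
- by exists t; [left | exists (rcons p i)].
- by exists t' => //; right.
Qed.

Lemma root_aapply s p t l o : root_label (aapply s p t) = Some (l, o) ->
  root_label (apply s t) = Some l /\ (o <> Explicit -> implicit_root s t = Some l).
Proof.
elim: t p => [x|X w IH|f ts] p /=.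
- by rewrite root_label_map_tree; case: (root_label (svar s x)) => //= l0 [<- <-].
- case: (sctx s X) => [l0 ts0|] /=; first by case=> <- <-.
  exact: IH.
- by case=> <- <-.
Qed.

Lemma crossing_free_edges s p t e : crossing_free s t -> List.In e (edges (aapply s p t)) ->
  e.1.2 <> e.2.2 -> G1 e.1.1 -> G2 e.2.1 -> False.
Proof.
move=> Ht; elim: Ht p e => [x|X w Hw IH HX|f ts Hts IH Hf] p e.
- by move=> /= He; case: (edges_map_tree He) => e0 _ ->.
- move=> /= He; case: (edges_plug He) => [{}He|/IH //|].
    by case: (edges_map_tree He) => e0 _ ->.
  move=> [l [[r ro] [Hl Hr ->]]] /=.
  have [l0 Hl0 ->] := hole_father_map_tree Hl.
  move=> _ G1l0 G2r; have [Er _] := root_aapply Hr.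
  by move: (HX l0 Hl0 G1l0); rewrite Er /= G2r.
- rewrite aapply_App => He; case: (edges_NodeP He) => T /In_aapply_args[t' Ht' [q ->]].
  case=> [[[l o] Hr ->]|{}He] /=; last exact: IH He.
  move=> Ho G1f G2l; have [_ Ei] := root_aapply Hr.
  by move: (Hf G1f t' Ht'); rewrite Ei /=; [rewrite G2l | move=> Eo; apply: Ho].
Qed.

Lemma crossing_free_noncrossing s u v :
  crossing_free s u -> crossing_free s v -> noncrossing G1 G2 s u v.
Proof.
by move=> Hu Hv a b Ha Hb; split=> -[o1 [o2 [He Ho]]];
  [exact: crossing_free_edges Hu He Ho Ha Hb | exact: crossing_free_edges Hv He Ho Ha Hb].
Qed.

Lemma crossing_free_unary s a t : crossing_free s t ->
  (G1 a -> ~~ oapp G2 false (implicit_root s t)) -> crossing_free s (App a [:: t]).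
Proof. by move=> Ht Hroot; constructor=> [t' [<-|[]]|/Hroot Ha t' [<-|[]]]. Qed.

Definition phase2_wrap c X t :=
  if G2 (first_letter c X) then App (first_letter c X) [:: if remove2 c X then t else CApp X t]
  else CApp X t.

Lemma transform_CApp c X w :
  transform G1 G2 c (CApp X w) =
  let: a := last_letter c X in let: w' := transform G1 G2 c w in
  if G1 a && remove1 c X then App a [:: w']
  else phase2_wrap c X (if G1 a then App a [:: w'] else w').
Proof. by rewrite /transform /=; case: (G1 _); case: (remove1 c X). Qed.

Section TransformCrossingFree.
Variables (c : choices) (s : subst).
Hypothesis father_notG1 : forall X,
  ~~ G1 (last_letter c X) -> forall l, hole_father (sctx s X) l -> ~~ G1 l.
Hypothesis ctx_root_notG2 : forall X,
  ~~ G2 (first_letter c X) -> ~~ oapp G2 false (root_label (sctx s X)).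
Hypothesis var_root_notG2 : forall x,
  ~~ G2 (first_letter_var c x) -> ~~ oapp G2 false (root_label (svar s x)).

Lemma implicit_root_transform t : ~~ oapp G2 false (implicit_root s (transform G1 G2 c t)).
Proof.
elim: t => [x|X w IH|f ts].
- rewrite /transform /=; case: ifP => //= /negbT; exact: var_root_notG2.
- rewrite transform_CApp /phase2_wrap; case: ifP => // _; case: ifP => //= /negbT Hb.
  by case: (sctx s X) (ctx_root_notG2 Hb) => // _; case: ifP.
- by rewrite /transform /=.
Qed.

Lemma crossing_free_transform t : crossing_free s (transform G1 G2 c t).
Proof.
elim/term_nested_ind: t => [x|X w IH|f ts IH].
- rewrite /transform /=; case: ifP => [Hb|_]; last exact: CrossingFreeVar.
  by apply: crossing_free_unary; [exact: CrossingFreeVar | move=> /G1_notG2; rewrite Hb].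
- rewrite transform_CApp; set w1 := (if G1 (last_letter c X) then _ else _).
  have Hw1 : crossing_free s w1.
    rewrite /w1; case: ifP => // _; apply: crossing_free_unary IH _.
    by move=> _; exact: implicit_root_transform.
  case: ifP => [/andP[Ha _]|_]; first by move: Hw1; rewrite /w1 Ha.
  have HX : crossing_free s (CApp X w1).
    apply: CrossingFreeCApp Hw1 _ => l Hl G1l; rewrite /w1.
    case: ifP => [Ha|/negbT Ha]; first by rewrite /= (negbTE (G1_notG2 Ha)).
    by move: (father_notG1 Ha Hl); rewrite G1l.
  rewrite /phase2_wrap; case: ifP => [Hb|_] //.
  by apply: crossing_free_unary; [case: ifP | move=> /G1_notG2; rewrite Hb].
- rewrite /transform /= -map_comp; constructor=> [t' | _ t'] /List.in_map_iff[t [<- Ht]].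
  + exact: IH.
  + exact: implicit_root_transform.
Qed.

End TransformCrossingFree.

Lemma exists_transform_solution s u v :
  solution arity s u v -> nonempty s u v ->
  exists c s',
    let u' := transform G1 G2 c u in
    let v' := transform G1 G2 c v in
    [/\ solution arity s' u' v', nonempty s' u' v',
        apply s' u' = apply s u & noncrossing G1 G2 s' u' v'].
Proof.
move=> [[HX Hx] Euv] Hne.
have [d0 _] : exists d0 : Sigma, True.
{ move: (holes_apply u (conj HX Hx)); case: (apply s u) => [d0 _|] //; by exists d0. }
have [f Hf] := functional_choice (fun X => ctx_split_spec (sctx s X))
  (fun X => exists_ctx_split d0 (HX X)).
have [g Hg] := functional_choice (fun x => var_split_spec (svar s x))
  (fun x => exists_var_split (Hx x)).
pose c := Choices (split_last \o f) (split_rem1 \o f) (split_first \o f) (split_rem2 \o f)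
                  (fst \o g).
pose s' : subst := Subst (split_body \o f) (snd \o g).
have apply_s' t : (forall X, occurs_cv X t -> sctx s X <> Hole) ->
    apply s' (transform G1 G2 c t) = apply s t.
{ move=> Ht; rewrite apply_transform; apply: eq_apply_occurs => [X /Ht NX|x] /=.
  - by case: (Hf X) => _ /(_ NX) ->.
  - by case: (Hg x) => _ ->. }
exists c, s'; split.
- split; last by rewrite !apply_s' // => X HXo; apply: Hne; [right | left].
  by split=> [X|x] /=; [case: (Hf X) | case: (Hg x)].
- move=> X HXo; have [Ho N1 N2] : [/\ occurs_cv X u \/ occurs_cv X v,
      ~~ (G1 (last_letter c X) && remove1 c X) & ~~ (G2 (first_letter c X) && remove2 c X)].
  { by case: HXo => /occurs_transform[Ho ? ?]; split=> //; [left | right]. }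
  by case: (Hf X) => _ _ _ _ /(_ (Hne X Ho)); apply.
- by apply: apply_s' => X HXo; apply: Hne; left.
- apply: crossing_free_noncrossing; apply: crossing_free_transform.
  all: by [move=> X /=; case: (Hf X) | move=> X /=; case: (Hf X) | move=> x /=; case: (Hg x)].
Qed.

End Procedure.

Theorem lemma5p1 (Sigma V CV : Type) (arity : Sigma -> nat) (G1 G2 : pred Sigma) :
  (forall a, G1 a -> arity a = 1) ->
  (forall a, G2 a -> arity a = 1) ->
  (forall a, G1 a -> G2 a -> False) ->
  forall u v : term Sigma V CV,
  wf_term arity u -> wf_term arity v ->
  (forall c : choices Sigma V CV,
     (exists s' : subst Sigma V CV,
        solution arity s' (transform G1 G2 c u) (transform G1 G2 c v)) ->
     exists s : subst Sigma V CV, solution arity s u v) /\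
  (forall s : subst Sigma V CV,
     solution arity s u v -> nonempty s u v ->
     exists (c : choices Sigma V CV) (s' : subst Sigma V CV),
       let u' := transform G1 G2 c u in
       let v' := transform G1 G2 c v in
       [/\ solution arity s' u' v', nonempty s' u' v',
           apply s' u' = apply s u & noncrossing G1 G2 s' u' v']).
Proof.
move=> G1_unary G2_unary G1_G2_disjoint u v _ _; split=> [c [s' Hs']|s].
- by eexists; exact: solution_transform Hs'.
- exact: exists_transform_solution.
Qed.
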